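(* If $G$ is a graph with no isolated vertices and total domination number $\gamma_t(G) = 3$, then $\gamma_{\rm gr}^t(G) > 3$.
   Context: All graphs are finite, simple, without isolated vertices. $\gamma_t(G)$ is the minimum size of a set $D$ of vertices such that every vertex of $G$ has a neighbor in $D$. $N(v)$ denotes the open neighborhood of $v$. A sequence $S=(v_1,\ldots,v_k)$ of distinct vertices of $G$ is a legal (open neighborhood) sequence if $N(v_i)\setminus \bigcup_{j=1}^{i-1} N(v_j)\neq\emptyset$ for every $i\in\{2,\ldots,k\}$. It is a total dominating sequence if moreover the set $\{v_1,\ldots,v_k\}$ is a total dominating set of $G$. The Grundy total domination number $\gamma_{\rm gr}^t(G)$ is the maximum length of a total dominating sequence of $G$. *)

From mathcomp Require Import all_boot.
Set Implicit Arguments. Unset Strict Implicit. Unset Printing Implicit Defensive.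

Definition simple_graph (T : finType) (e : rel T) : Prop :=
  symmetric e /\ irreflexive e.

Definition no_isolated (T : finType) (e : rel T) : Prop :=
  forall v : T, exists u : T, e v u.

Definition N (T : finType) (e : rel T) (v : T) : {set T} := [set u | e v u].

Definition total_dominating (T : finType) (e : rel T) (D : {set T}) : bool :=
  [forall v, [exists u in D, e v u]].

Definition is_gamma_t (T : finType) (e : rel T) (k : nat) : Prop :=
  (exists D : {set T}, total_dominating e D /\ #|D| = k) /\
  (forall D : {set T}, total_dominating e D -> k <= #|D|).

Definition Nunion (T : finType) (e : rel T) (s : seq T) : {set T} :=
  \bigcup_(v <- s) N e v.

(* legal open neighbourhood sequence: distinct vertices, each v_i (i >= 2)
   footprints a vertex not in the union of previous neighbourhoods *)
Definition legal_seq (T : finType) (e : rel T) (s : seq T) : bool :=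
  uniq s &&
  all (fun i : nat =>
         if s is x0 :: _ then N e (nth x0 s i) :\: Nunion e (take i s) != set0
         else true)
      (iota 1 (size s).-1).

Definition total_dominating_seq (T : finType) (e : rel T) (s : seq T) : bool :=
  legal_seq e s && total_dominating e [set x in s].

From mathcomp Require Import all_boot.

(* A legal sequence can always be extended greedily to a total dominating
   sequence: a neighbour of a vertex not yet dominated footprints it.  So it
   suffices to exhibit a legal sequence of length 4.  Since gamma_t = 3, no
   edge xy totally dominates, hence some u is adjacent to neither x nor y; for
   a neighbour z of u the sequence (u, x, y, z) is legal, with y, x, u as the
   respective footprints of x, y, z. *)

Section LegalSequences.

Variables (T : finType) (e : rel T).

Lemma mem_Nunion (s : seq T) w : (w \in Nunion e s) = has (fun x => e x w) s.
Proof.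
elim: s => [|x s IH]; rewrite /Nunion ?big_nil ?big_cons ?inE //.
by rewrite -/(Nunion e s) IH.
Qed.

(* No distinctness hypothesis is needed: a vertex of s footprints nothing. *)
Lemma legal_rcons (s : seq T) v w :
  legal_seq e s -> e v w -> ~~ has (fun x => e x w) s ->
  legal_seq e (rcons s v).
Proof.
case/andP=> s_uniq s_legal vw w_new.
have v_new : v \notin s by apply: contra w_new => sv; apply/hasP; exists v.
have foot : N e v :\: Nunion e s != set0.
  by apply/set0Pn; exists w; rewrite in_setD mem_Nunion /N inE w_new vw.
apply/andP; split; first by rewrite rcons_uniq v_new.
case: s {s_uniq v_new w_new} s_legal foot => [|x0 s] //= s_legal foot.
rewrite size_rcons -(addn1 (size s)) iotaD all_cat; apply/andP; split.
  apply/allP => i i_s; have := allP s_legal i i_s.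
  have lei : i <= size s by move: i_s; rewrite mem_iota add1n ltnS => /andP[].
  by rewrite -rcons_cons nth_rcons -cats1 take_cat /= !ltnS lei.
apply/allP => i; rewrite add1n inE => /eqP ->.
by rewrite -rcons_cons nth_rcons /= ltnn eqxx -cats1 take_cat /= ltnn subnn take0 cats0.
Qed.

Lemma legal_seq_size (s : seq T) : legal_seq e s -> size s <= #|T|.
Proof. by case/andP => /card_uniqP <- _; apply: max_card. Qed.

Hypotheses (e_sym : symmetric e) (e_noiso : no_isolated e).

Lemma legal_rcons_undominated (s : seq T) :
  legal_seq e s -> ~~ total_dominating e [set x in s] ->
  exists v, legal_seq e (rcons s v).
Proof.
move=> s_legal /forallPn[w /existsPn w_undom].
have [v wv] := e_noiso w; exists v; apply: (@legal_rcons _ v w s_legal).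
  by rewrite e_sym.
by apply/hasPn => x sx; have := w_undom x; rewrite inE sx e_sym.
Qed.

Lemma legal_seq_extend (s : seq T) :
  legal_seq e s -> exists t, total_dominating_seq e (s ++ t).
Proof.
(* Each extension step adds a new vertex, so #|T| - size s strictly drops. *)
move: {2}(#|T| - size s) (leqnn (#|T| - size s)) => n.
elim: n s => [|n IH] s le_n s_legal.
all: have [s_td|/(legal_rcons_undominated s s_legal)[v sv_legal]] :=
  boolP (total_dominating e [set x in s]).
all: try by exists [::]; rewrite cats0 /total_dominating_seq s_legal.
  by have := legal_seq_size _ sv_legal; rewrite size_rcons ltnNge -subn_eq0 -leqn0 le_n.
have [|t td] := IH (rcons s v) _ sv_legal; last by exists (v :: t); rewrite -cat_rcons.
by rewrite size_rcons subnS -subn1 leq_subLR add1n.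
Qed.

End LegalSequences.

Theorem mainTheorem3 (T : finType) (e : rel T) :
  simple_graph e -> no_isolated e -> is_gamma_t e 3 ->
  exists s : seq T, total_dominating_seq e s /\ 3 < size s.
Proof.
move=> [e_sym e_irr] e_noiso [[D [_ card_D]] gamma_min].
have [x _] : exists x, x \in D by apply/card_gt0P; rewrite card_D.
have [y xy] := e_noiso x.
have /forallPn[u /existsPn u_undom] : ~~ total_dominating e [set x; y].
  by apply/negP => /gamma_min; rewrite cards2; case: (_ != _).
have [ux uy] : ~~ e u x /\ ~~ e u y.
  by split; [have := u_undom x | have := u_undom y]; rewrite !inE eqxx ?orbT.
have [z uz] := e_noiso u.
have legal_ux : legal_seq e [:: u; x].
  by apply: (@legal_rcons _ _ [:: u] x y); rewrite //= orbF.
have legal_uxy : legal_seq e [:: u; x; y].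
  apply: (@legal_rcons _ _ [:: u; x] y x) => //; first by rewrite e_sym.
  by rewrite /= e_irr !orbF.
have legal_uxyz : legal_seq e [:: u; x; y; z].
  apply: (@legal_rcons _ _ [:: u; x; y] z u) => //; first by rewrite e_sym.
  by rewrite /= e_irr (e_sym x) (e_sym y) (negbTE ux) (negbTE uy).
have [t td] := @legal_seq_extend T e e_sym e_noiso _ legal_uxyz.
by exists ([:: u; x; y; z] ++ t); rewrite size_cat.
Qed.
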